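(* Let $d\ge 2$ and $n\ge 2$ be integers, let $k\ge 0$ be such that $n_k\le n<n_{k+1}$, and let $\lambda(n)=(l_{k+1},l_k,\ldots,l_0)$. Then $$\Delta W(D_{n,d};q)=\sum_{i=0}^k d^iq^{2i+1}+\sum_{i=0}^{k'}d^i(l_i+1)q^{2i+2},$$ where $k'=k-1$ if $n_k\le n<m_k$ and $k'=k$ if $m_k\le n<n_{k+1}$.
   Context: For a connected graph $G$, $W(G;q)=\sum_{\{u,v\}}q^{d(u,v)}$ over unordered pairs of distinct vertices, $d$ the graph distance. The $d$-ary dendrimer $D_{n,d}$ is the tree on vertex set $\{1,\ldots,n\}$ defined inductively: $D_{1,d}$ is the single vertex $1$, and $D_{n,d}$ is obtained from $D_{n-1,d}$ by attaching a new leaf $n$ to the smallest-numbered vertex of $D_{n-1,d}$ having degree $\le d$. Set $\Delta W(D_{n,d};q)=W(D_{n,d};q)-W(D_{n-1,d};q)$. Define $n_k=2+(d+1)\frac{d^k-1}{d-1}$ and $m_k=3+2d\frac{d^k-1}{d-1}$ for $k\ge0$. For a vertex $m$ with $n_k\le m<n_{k+1}$, its label is $\lambda(m)=(l_{k+1},l_k,\ldots,l_0)$ where $0\le l_i<d$ and $\sum_{i=0}^{k+1}l_id^i=m-n_k+(d-1)d^k$ (the base-$d$ digits, possibly with a leading zero). *)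

From mathcomp Require Import all_boot all_order all_algebra.
Set Implicit Arguments. Unset Strict Implicit. Unset Printing Implicit Defensive.
Import GRing.Theory.
Local Open Scope ring_scope.

(* The d-ary dendrimer D_{n,d}: vertices 1..n.  [pars d n] is the list
   [:: p_2; ...; p_n] where p_m is the vertex to which leaf m was attached. *)

Definition deg_in (n : nat) (s : seq nat) (v : nat) : nat :=
  (count (pred1 v) s + ((1 < v) && (v <= n)))%N.

Fixpoint pars (d n : nat) : seq nat :=
  match n with
  | 0 => [::]
  | n'.+1 =>
      let s := pars d n' in
      if n' is 0 then [::]
      else
        rcons s (nth 0%N (iota 1 n') (find (fun v => deg_in n' s v <= d)%N (iota 1 n')))
  end.

Definition par (d n m : nat) : nat := nth 0%N (pars d n) (m - 2).

Definition adj (d n u v : nat) : bool :=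
  has (fun m => ((u == m) && (v == par d n m)) || ((v == m) && (u == par d n m)))
      (iota 2 (n - 1)).

Fixpoint within (d n k u v : nat) : bool :=
  match k with
  | 0 => u == v
  | k'.+1 => within d n k' u v ||
             has (fun w => adj d n w v && within d n k' u w) (iota 1 n)
  end.

(* graph distance in D_{n,d} (the least k with v within k of u; the tree is
   connected on n vertices so this k is < n) *)
Definition dist (d n u v : nat) : nat := find (fun k => within d n k u v) (iota 0 n).

Definition W (d n : nat) : {poly int} :=
  \sum_(u < n.+1) \sum_(v < n.+1 | (0 < u)%N && (u < v)%N) 'X^(dist d n u v).

Definition DeltaW (d n : nat) : {poly int} := W d n - W d n.-1.

Definition nk (d k : nat) : nat := (2 + (d + 1) * ((d ^ k - 1) %/ (d - 1)))%N.
Definition mk (d k : nat) : nat := (3 + 2 * d * ((d ^ k - 1) %/ (d - 1)))%N.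

Definition label (d k m i : nat) : nat :=
  (((m - nk d k + (d - 1) * d ^ k) %/ d ^ i) %% d)%N.

(* Vertex m >= 2 of D_{n,d} is attached to parent(m) = (m - 3) div d + 1, so
   distances are computed by climbing towards the root 1.  Adding the leaf n
   changes W by T(n) = sum_{u < n} q^d(u,n) = q * sum_{u < n} q^d(u,P) with
   P = parent(n).  Every u >= 2 is one step further from P than its own parent,
   except on the path from P to the root, where it is one step closer; grouping
   the vertices by their parent (vertex 1 has d + 1 children, every other vertex
   d, and P has (n - 3) mod d children before n) gives
     T(n) = q + ((n - 3) mod d + 1) q^2 + d q^2 T(P).
   P lies one level lower than n and its label is that of n without the last
   digit l_0 = (n - 3) mod d, so the right-hand side satisfies the same
   recurrence; the first level n_0 <= n < n_1 is checked directly. *)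

From mathcomp Require Import all_boot all_order all_algebra zify ring.
Set Implicit Arguments. Unset Strict Implicit. Unset Printing Implicit Defensive.

Lemma count_iota_interval lo hi s len :
  count (fun m => lo <= m < hi) (iota s len) = minn hi (s + len) - maxn lo s.
Proof.
elim: len s => [|len IH] s /=; first lia.
by rewrite IH; case: (leqP lo s); case: (ltnP s hi) => /=; lia.
Qed.

Lemma find_iota_first (P : pred nat) s len t :
  (forall j, s <= j < t -> ~~ P j) -> P t -> s <= t < s + len ->
  find P (iota s len) = t - s.
Proof.
elim: len s => [|len IH] s notP Pt /andP [st tlt] /=; first lia.
case: (ltngtP s t) => [ltst | | eq_st]; [| lia | by rewrite eq_st Pt subnn].
rewrite (negbTE (notP s _)) ?leqnn ?ltst // (IH s.+1); [lia | | by [] | lia].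
by move=> j /andP [sj jt]; apply: notP; rewrite jt andbT ltnW.
Qed.

Section TreeDistance.
Variable d : nat.

(* Closed form of the attachment rule (see [pars_parent]); vertex 1 is its own parent. *)
Definition parent (m : nat) : nat := (m - 3) %/ d + 1.

Lemma parent_gt0 m : 0 < parent m.
Proof. by rewrite /parent addn1. Qed.

Lemma parent_lt m : 1 < m -> parent m < m.
Proof. by move=> m_gt1; have := leq_div (m - 3) d; rewrite /parent; lia. Qed.

Lemma parent_leq m : 0 < m -> parent m <= m.
Proof.
case: (ltnP 1 m) => [/parent_lt/ltnW // | m_le1 m_gt0].
have -> : m = 1 by lia.
by rewrite /parent div0n.
Qed.

Lemma parent_divn_eq m : 2 < m -> m = d * (parent m).-1 + 3 + (m - 3) %% d.
Proof.
move=> m_gt2; have := divn_eq (m - 3) d; rewrite /parent addn1 /= mulnC.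
by move: (_ %/ d) (_ %% d) => q r; lia.
Qed.

Lemma iter_parent_gt0 j x : 0 < x -> 0 < iter j parent x.
Proof. by case: j => [|j] //= _; apply: parent_gt0. Qed.

Lemma iter_parent_leq j x : 0 < x -> iter j parent x <= x.
Proof.
move=> x_gt0; elim: j => [|j IH] //=.
exact: leq_trans (parent_leq (iter_parent_gt0 j x_gt0)) IH.
Qed.

(* The larger endpoint decreases at every step, so fuel [u + v] suffices for [u, v >= 1]. *)
Fixpoint tdist_rec (fuel u v : nat) : nat :=
  if fuel is fuel'.+1 then
    if u == v then 0
    else if u < v then (tdist_rec fuel' u (parent v)).+1
    else (tdist_rec fuel' (parent u) v).+1
  else 0.

Definition tdist (u v : nat) : nat := tdist_rec (u + v) u v.

Lemma tdist_rec_fuel f1 f2 u v : 0 < u -> 0 < v -> u + v <= f1 -> u + v <= f2 ->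
  tdist_rec f1 u v = tdist_rec f2 u v.
Proof.
elim: f1 f2 u v => [|f1 IH] [|f2] u v u_gt0 v_gt0 le1 le2 /=; try lia.
have pu := @parent_lt u; have pv := @parent_lt v.
by case: eqP => // neq_uv; case: (ltnP u v) => cmp_uv; congr S; apply: IH;
  rewrite ?parent_gt0 //; lia.
Qed.

Lemma tdistE u v : 0 < u -> 0 < v ->
  tdist u v = if u == v then 0
              else if u < v then (tdist u (parent v)).+1 else (tdist (parent u) v).+1.
Proof.
move=> u_gt0 v_gt0; rewrite /tdist -[u + v]prednK ?addn_gt0 ?u_gt0 //=.
have pu := @parent_lt u; have pv := @parent_lt v.
by case: eqP => // neq_uv; case: (ltnP u v) => cmp_uv; congr S; apply: tdist_rec_fuel;
  rewrite ?parent_gt0 //; lia.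
Qed.

Lemma tdistxx u : 0 < u -> tdist u u = 0.
Proof. by move=> u_gt0; rewrite tdistE // eqxx. Qed.

Lemma tdistC u v : 0 < u -> 0 < v -> tdist u v = tdist v u.
Proof.
elim: {u v}(u + v) {-2}u {-2}v (leqnn (u + v)) => [|N IH] u v le_uv u_gt0 v_gt0; first lia.
rewrite tdistE // [tdist v u]tdistE // eq_sym.
have pu := @parent_lt u; have pv := @parent_lt v.
by case: eqP => // neq_uv; case: (ltngtP u v) => cmp_uv //; try lia; congr S; apply: IH;
  rewrite ?parent_gt0 //; lia.
Qed.

Lemma tdist_lt_max u v : 0 < u -> 0 < v -> tdist u v < maxn u v.
Proof.
elim: {u v}(u + v) {-2}u {-2}v (leqnn (u + v)) => [|N IH] u v le_uv u_gt0 v_gt0; first lia.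
rewrite tdistE //; case: eqP => [-> | neq_uv]; first lia.
case: (ltnP u v) => cmp_uv.
  by have := @parent_lt v; have := IH u (parent v); rewrite parent_gt0; lia.
by have := @parent_lt u; have := IH (parent u) v; rewrite parent_gt0; lia.
Qed.

Fixpoint ancestor_rec (fuel a x : nat) : bool :=
  (x == a) || (if fuel is fuel'.+1 then (1 < x) && ancestor_rec fuel' a (parent x) else false).

Definition ancestor (a x : nat) : bool := ancestor_rec x a x.

Lemma ancestor_rec_fuel f1 f2 a x : x <= f1 -> x <= f2 ->
  ancestor_rec f1 a x = ancestor_rec f2 a x.
Proof.
elim: f1 f2 x => [|f1 IH] [|f2] x le1 le2 //=; try by have -> : x = 0 by lia.
case: (ltnP 1 x) => x_gt1 //=; rewrite (IH f2) //; have := parent_lt x_gt1; lia.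
Qed.

Lemma ancestorE a x : ancestor a x = (x == a) || (1 < x) && ancestor a (parent x).
Proof.
rewrite /ancestor; case: x => [|x] /=; first by rewrite orbF.
case: (ltnP 1 x.+1) => x_gt1 //=.
by rewrite (@ancestor_rec_fuel x (parent x.+1)) //; have := parent_lt x_gt1; lia.
Qed.

Lemma ancestor_leq a x : ancestor a x -> a <= x.
Proof.
elim: x {-2}x (leqnn x) => [|N IH] x le_xN; rewrite ancestorE.
  by case/orP => [/eqP -> // | /andP []]; lia.
case/orP => [/eqP -> // | /andP [x_gt1 /IH]].
by have := parent_lt x_gt1; lia.
Qed.

Lemma tdist_parentr u v : 0 < u -> 1 < v ->
  if ancestor v u then tdist u (parent v) = (tdist u v).+1
  else tdist u v = (tdist u (parent v)).+1.
Proof.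
move=> u_gt0 v_gt1; elim: u {-2}u (leqnn u) u_gt0 => [|N IH] u le_uN u_gt0; first lia.
have pv_lt := parent_lt v_gt1; have pv_gt0 := parent_gt0 v; have v_gt0 := ltnW v_gt1.
case: (ltngtP u v) => cmp_uv.
- rewrite (negbTE (_ : ~~ ancestor v u)); last by apply/negP => /ancestor_leq; lia.
  by rewrite (tdistE u_gt0 v_gt0) ltn_eqF ?cmp_uv.
- have u_gt1 := ltn_trans v_gt1 cmp_uv; have pu_lt := parent_lt u_gt1.
  rewrite ancestorE u_gt1 gtn_eqF //= (tdistE u_gt0 v_gt0) (tdistE u_gt0 pv_gt0).
  rewrite !gtn_eqF ?(ltn_trans pv_lt) // (ltnNge u v) (ltnNge u (parent v)).
  rewrite (ltnW cmp_uv) (ltnW (ltn_trans pv_lt cmp_uv)) /=.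
  have := IH (parent u) ltac:(lia) (parent_gt0 u).
  by case: ancestor => ->.
- subst u; rewrite ancestorE eqxx /= tdistxx // (tdistE v_gt0 pv_gt0).
  by rewrite gtn_eqF // ltnNge (ltnW pv_lt) /= tdistxx.
Qed.

Lemma tdist_iter_parent i x : 0 < x -> (forall j, j < i -> 1 < iter j parent x) ->
  tdist (iter i parent x) x = i.
Proof.
elim: i x => [|i IH] x x_gt0 iter_gt1; first by rewrite tdistxx.
have x_gt1 : 1 < x by apply: (iter_gt1 0).
have px_gt0 := parent_gt0 x.
have lt_x : iter i.+1 parent x < x.
  by rewrite iterSr; apply: leq_ltn_trans (iter_parent_leq i px_gt0) (parent_lt x_gt1).
rewrite tdistE ?iter_parent_gt0 // ltn_eqF // lt_x iterSr IH //.
by move=> j j_lt; rewrite -iterSr; apply: iter_gt1.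
Qed.

End TreeDistance.

Section DendrimerParents.
Variable d : nat.
Hypothesis d_gt0 : 0 < d.
Local Notation parent := (parent d).

Lemma parent_eq_interval m v : 1 < m -> 0 < v ->
  (parent m == v) = ((if v == 1 then 0 else d * (v - 1) + 3) <= m < d * v + 3).
Proof.
move=> m_gt1 v_gt0; rewrite /parent.
have -> : ((m - 3) %/ d + 1 == v) = (v - 1 <= (m - 3) %/ d < v).
  by move: ((m - 3) %/ d) => q; apply/eqP/andP => [<- | []]; lia.
rewrite leq_divRL // ltn_divLR // mulnC [v * d]mulnC.
have dvE : d * v = d * (v - 1) + d by rewrite -mulnSr; congr muln; lia.
have dv_gt0 : v != 1 -> 0 < d * (v - 1) by move=> ?; rewrite muln_gt0 d_gt0; lia.
case: eqP => [-> | /eqP /dv_gt0]; rewrite ?subnn ?muln0 ?muln1 ?dvE; lia.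
Qed.

Lemma deg_in_parents n v : 0 < v ->
  deg_in n.+1 (map parent (iota 2 n)) v =
  minn (d * v + 3) n.+2 - maxn (if v == 1 then 0 else d * (v - 1) + 3) 2
  + ((1 < v) && (v <= n.+1)).
Proof.
move=> v_gt0; rewrite /deg_in count_map -[n.+2]/(2 + n) -count_iota_interval; congr (_ + _).
by apply: eq_in_count => m; rewrite mem_iota => /andP [m_ge2 _] /=; rewrite parent_eq_interval.
Qed.

Lemma pars_parent n : 0 < n -> pars d n = map parent (iota 2 n.-1).
Proof.
elim: n => [|[|n] IH] // _.
have -> : pars d n.+2 = rcons (pars d n.+1) (nth 0 (iota 1 n.+1)
    (find (fun v => deg_in n.+1 (pars d n.+1) v <= d) (iota 1 n.+1))) by [].
rewrite IH // (_ : n.+2.-1 = n + 1); last by rewrite addn1.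
rewrite iotaD map_cat [map _ (iota _ 1)]/= cats1.
congr rcons; set p := parent (2 + n).
have p_gt0 : 0 < p by apply: parent_gt0.
have p_lt : p < n.+2 by apply: parent_lt.
have p_ge : ((p == 1) || (d * (p - 1) + 3 <= n.+2)) && (n.+2 < d * p + 3).
  by have := parent_eq_interval (m := n.+2) isT p_gt0; rewrite eqxx; case: eqP => _ /esym; lia.
rewrite (@find_iota_first _ _ _ p) ?p_gt0 ?nth_iota //=; try lia.
- move=> j /andP [j_gt0 j_lt]; rewrite deg_in_parents // -ltnNge.
  have : d * j <= d * (p - 1) by rewrite leq_mul2l; lia.
  by case: eqP; lia.
- by rewrite deg_in_parents //; case: eqP; lia.
Qed.

End DendrimerParents.

Section DendrimerDistance.
Variables (d n : nat).
Hypothesis d_gt0 : 0 < d.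
Local Notation parent := (parent d).
Local Notation tdist := (tdist d).

Lemma par_parent m : 1 < m <= n -> par d n m = parent m.
Proof.
move=> /andP [m_gt1 m_le]; rewrite /par pars_parent //; last lia.
by rewrite (nth_map 0) ?size_iota ?nth_iota; try lia; congr parent; lia.
Qed.

Lemma adj_parent m : 1 < m <= n -> adj d n (parent m) m /\ adj d n m (parent m).
Proof.
move=> m_in; have par_m := par_parent m_in.
by split; apply/hasP; exists m; rewrite ?mem_iota ?par_m ?eqxx ?orbT //; lia.
Qed.

Lemma adj_tdist_le u w v : 0 < u -> adj d n w v -> tdist u v <= (tdist u w).+1.
Proof.
move=> u_gt0 /hasP [m]; rewrite mem_iota => m_in; rewrite par_parent; last lia.
have := tdist_parentr d u_gt0 (_ : 1 < m); case: ancestor => [|] step.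
all: by case/orP => /andP [/eqP -> /eqP ->]; rewrite step //; lia.
Qed.

Lemma within_tdist_le k u v : 0 < u -> within d n k u v -> tdist u v <= k.
Proof.
move=> u_gt0; elim: k v => [|k IH] v /=; first by move=> /eqP <-; rewrite tdistxx.
case/orP => [/IH | /hasP [w _] /andP [/(adj_tdist_le u_gt0) le_v /IH]]; lia.
Qed.

Lemma withinS k u v : within d n k.+1 u v =
  within d n k u v || has (fun w => adj d n w v && within d n k u w) (iota 1 n).
Proof. by []. Qed.

Lemma within_adjl k a' a b : 0 < a' <= n -> adj d n a' a ->
  within d n k a b -> within d n k.+1 a' b.
Proof.
move=> a'_in adj_a'a; elim: k b => [|k IH] b; rewrite withinS.
  move=> /eqP <-; apply/orP; right; apply/hasP; exists a'.
    by rewrite mem_iota; lia.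
  by rewrite /= adj_a'a eqxx.
rewrite [within _ _ k.+2 _ _]withinS.
case/orP => [/IH -> // | /hasP [w w_in /andP [adj_wb /IH within_a'w]]].
by apply/orP; right; apply/hasP; exists w; rewrite ?adj_wb.
Qed.

Lemma tdist_le_within k u v : 0 < u <= n -> 0 < v <= n ->
  tdist u v <= k -> within d n k u v.
Proof.
elim: k u v => [|k IH] u v u_in v_in; rewrite tdistE; try lia.
  by case: eqP => [-> | _]; [rewrite /= eqxx | case: ifP].
case: eqP => [-> _ | neq_uv]; first by elim: k.+1 => [|j IHj] /=; rewrite ?eqxx ?IHj.
case: (ltnP u v) => cmp_uv le_k.
  have pv_lt : parent v < v by apply: parent_lt; lia.
  have pv_gt0 := parent_gt0 d v.
  apply/orP; right; apply/hasP; exists (parent v); first by rewrite mem_iota; lia.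
  rewrite (adj_parent (m := v) _).1 /=; last lia.
  by apply: IH => //; lia.
have pu_lt : parent u < u by apply: parent_lt; lia.
have pu_gt0 := parent_gt0 d u.
by apply: (within_adjl u_in (adj_parent (m := u) _).2 (IH _ _ _ v_in _)); lia.
Qed.

Lemma dist_tdist u v : 0 < u <= n -> 0 < v <= n -> dist d n u v = tdist u v.
Proof.
move=> u_in v_in; rewrite /dist (eq_find (a2 := fun k => tdist u v <= k)); last first.
  move=> k; apply/idP/idP; [apply: within_tdist_le | apply: tdist_le_within] => //; lia.
have lt_max := @tdist_lt_max d u v ltac:(lia) ltac:(lia).
rewrite (@find_iota_first _ _ _ (tdist u v)) ?subn0 //; last lia.
by move=> j; rewrite -ltnNge => /andP [].
Qed.

End DendrimerDistance.

Section Levels.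
Variable d : nat.
Hypothesis d_gt1 : 1 < d.
Local Notation parent := (parent d).

Lemma geom_div k : (d ^ k - 1) %/ (d - 1) = \sum_(i < k) d ^ i.
Proof. by rewrite !subn1 predn_exp mulKn //; lia. Qed.

Lemma nkE k : nk d k = 2 + (d + 1) * \sum_(i < k) d ^ i.
Proof. by rewrite /nk geom_div. Qed.

Lemma mkE k : mk d k = nk d k + d ^ k.
Proof.
have := predn_exp d k; have := expn_gt0 d k; rewrite /mk nkE geom_div.
move: (\sum_(i < k) _) (d ^ k) => s p; rewrite -!subn1 => p_gt0 eq_p.
rewrite mulnBl mul1n in eq_p; rewrite mulnDl mul1n -mulnA.
have : s <= d * s by rewrite leq_pmull; lia.
lia.
Qed.

Lemma nk_gt1 k : 1 < nk d k.
Proof. by rewrite nkE; lia. Qed.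

Lemma nk0 : nk d 0 = 2.
Proof. by rewrite nkE big_ord0 muln0. Qed.

Lemma nkS k : nk d k.+1 = 3 + d * (nk d k - 1).
Proof.
rewrite !nkE big_ord_recl expn0.
under eq_bigr do rewrite /bump /= expnS.
rewrite -big_distrr /=; move: (\sum_(i < k) _) => s.
by rewrite mulnDr mulnCA; lia.
Qed.

Lemma nk1 : nk d 1 = d + 3.
Proof. by rewrite nkS nk0 muln1 addnC. Qed.

Lemma mk0 : mk d 0 = 3.
Proof. by rewrite mkE nk0 expn0. Qed.

Definition level k x := nk d k <= x < nk d k.+1.

Lemma level0 x : level 0 x = (2 <= x < d + 3).
Proof. by rewrite /level nk0 nk1. Qed.

Lemma level_divn_eq k n : level k.+1 n -> n - 3 = (nk d k - 1) * d + (n - nk d k.+1).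
Proof. by rewrite /level nkS (mulnC _ d); move: (d * _) => X; lia. Qed.

Lemma parent_level_eq k n : level k.+1 n -> parent n = nk d k + (n - nk d k.+1) %/ d.
Proof.
move=> n_lvl; rewrite /parent (level_divn_eq n_lvl) divnMDl; last lia.
by have := nk_gt1 k; lia.
Qed.

Lemma parent_level k x : level k.+1 x -> level k (parent x).
Proof.
move=> x_lvl; rewrite /level (parent_level_eq x_lvl) leq_addr /= -ltn_subRL ltn_divLR; last lia.
move: x_lvl (nkS k) (nkS k.+1) (nk_gt1 k); rewrite /level.
move: (nk d k.+2) (nk d k.+1) (nk d k) => C A B; rewrite !mulnBr !muln1 mulnBl (mulnC A) (mulnC B).
have := leq_pmulr B (ltnW d_gt1); have := leq_pmulr A (ltnW d_gt1).
by move: (d * A) (d * B) => dA dB; lia.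
Qed.

Lemma parent_level0 x : level 0 x -> parent x = 1.
Proof. by rewrite level0 /parent => x_lvl; rewrite divn_small //; lia. Qed.

Lemma level_iter_parent k x : level k x ->
  iter k.+1 parent x = 1 /\ forall i, i <= k -> 1 < iter i parent x.
Proof.
elim: k x => [|k IH] x x_lvl.
  split; first exact: parent_level0.
  by move=> [|//] _; move: x_lvl; rewrite /level nk0 => /andP [].
have [iter_root iter_gt1] := IH _ (parent_level x_lvl).
split; first by rewrite iterSr.
case=> [|i] i_le; last by rewrite iterSr iter_gt1.
by move: x_lvl => /andP [x_ge _]; apply: leq_trans (nk_gt1 _) x_ge.
Qed.

Lemma label_parent k n i : level k.+1 n -> label d k.+1 n i.+1 = label d k (parent n) i.
Proof.
move=> n_lvl; rewrite /label (parent_level_eq n_lvl) addKn (expnS d i) divnMA.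
by rewrite expnSr mulnA divnDMl //; lia.
Qed.

Lemma label0 k n : level k.+1 n -> label d k.+1 n 0 = (n - 3) %% d.
Proof.
move=> n_lvl; rewrite /label expn0 divn1 (level_divn_eq n_lvl) modnMDl.
by rewrite expnSr mulnA addnC modnMDl.
Qed.

Lemma mk_parent k n : level k.+1 n -> (n < mk d k.+1) = (parent n < mk d k).
Proof.
move=> n_lvl; rewrite !mkE (parent_level_eq n_lvl) ltn_add2l ltn_divLR -?expnSr; last lia.
by move: n_lvl => /andP [n_ge _]; move: (d ^ k.+1) => p; lia.
Qed.

Lemma tdist_root_level k x : level k x -> tdist d 1 x = k.+1.
Proof.
move=> x_lvl; have [root iter_gt1] := level_iter_parent x_lvl.
have x_gt0 : 0 < x := ltnW (iter_gt1 0 isT).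
by rewrite -{1}root tdist_iter_parent // => j; apply: iter_gt1.
Qed.

End Levels.

Import GRing.Theory.
Local Open Scope ring_scope.

Section Transmission.
Variable d : nat.
Local Notation parent := (parent d).
Local Notation tdist := (tdist d).

Definition transmission (n : nat) : {poly int} := \sum_(1 <= u < n) 'X^(tdist u n).

Lemma exp_tdist_parentl (R : pzRingType) (x : R) u v : (1 < u)%N -> (0 < v)%N ->
  x ^+ (tdist u v).+1 = x ^+ 2 * x ^+ tdist (parent u) v
    + (if ancestor d u v then x ^+ tdist (parent u) v - x ^+ 2 * x ^+ tdist (parent u) v else 0).
Proof.
move=> u_gt1 v_gt0; have u_gt0 := ltnW u_gt1; have pu_gt0 := parent_gt0 d u.
have := tdist_parentr d v_gt0 u_gt1; rewrite !(tdistC _ v_gt0) //.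
by case: ancestor => ->; [rewrite addrC subrK | rewrite addr0 -exprD].
Qed.

Lemma sum_ancestor (V : nmodType) (H : nat -> V) j x N : iter j parent x = 1%N ->
  (forall i, i < j -> 1 < iter i parent x)%N -> (x < N)%N ->
  \sum_(2 <= u < N | ancestor d u x) H u = \sum_(0 <= i < j) H (iter i parent x).
Proof.
elim: j x => [|j IH] x root iter_gt1 x_lt /=.
  rewrite [RHS]big_geq // big_nat_cond big1 // => u /andP [/andP [u_ge2 _]].
  by rewrite /= in root; rewrite root => /ancestor_leq; lia.
have x_gt1 : (1 < x)%N by apply: (iter_gt1 0%N).
have px_lt := parent_lt d x_gt1.
rewrite (bigID (pred1 x)) /= big_nat_recl //.
under [X in _ = _ + X]eq_bigr do rewrite iterSr.
rewrite -IH; [| by rewrite -iterSr | by move=> i ?; rewrite -iterSr; apply: iter_gt1 | lia].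
congr (_ + _).
  rewrite (eq_bigl (pred1 x)) ?big_nat1_eq ?x_lt ?(leq_trans _ x_gt1) //= => u.
  by rewrite /= andbC; case: eqP => // ->; rewrite ancestorE eqxx.
apply: eq_bigl => u; rewrite ancestorE x_gt1 /= eq_sym.
case: eqP => [-> | _]; rewrite ?andbT //.
by apply/esym/negbTE/negP => /ancestor_leq; lia.
Qed.

Lemma transmission_split n : (1 < n)%N ->
  let P := parent n in let G w := 'X^(tdist w P) in
  transmission n = 'X^(tdist 1%N n) + 'X^2 * \sum_(2 <= u < n) G (parent u)
    + \sum_(2 <= u < n | ancestor d u P) (G (parent u) - 'X^2 * G (parent u)).
Proof.
move=> n_gt1 P G; have P_gt0 : (0 < P)%N := parent_gt0 d n.
rewrite /transmission big_ltn // -addrA mulr_sumr [X in _ = _ + (_ + X)]big_mkcond.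
rewrite -big_split; congr (_ + _).
apply: eq_big_nat => u /andP [u_gt1 u_lt].
rewrite tdistE ?(ltn_eqF u_lt) ?u_lt ?(ltnW u_gt1) //=; last lia.
exact: exp_tdist_parentl.
Qed.

Hypothesis d_gt0 : (0 < d)%N.

Lemma W_tdist N :
  W d N = \sum_(u < N.+1) \sum_(v < N.+1 | (0 < u < v)%N) 'X^(tdist u v).
Proof.
apply: eq_bigr => u _; apply: eq_bigr => v /andP [u_gt0 lt_uv].
by rewrite dist_tdist //; have := ltn_ord u; have := ltn_ord v; lia.
Qed.

Lemma W_succ N : W d N.+1 = W d N + transmission N.+1.
Proof.
rewrite !W_tdist big_ord_recr /= [X in _ + X]big1 => [|v]; last first.
  by rewrite ltnNge -ltnS ltn_ord.
rewrite addr0 (eq_bigr (fun u : 'I_N.+1 =>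
    \sum_(v < N.+1 | (0 < u < v)%N) 'X^(tdist u v) + (if (0 < u)%N then 'X^(tdist u N.+1) else 0))).
  rewrite big_split /= -big_mkcond /transmission; congr (_ + _).
  rewrite -(big_mkord (fun u => 0 < u)%N (fun u => 'X^(tdist u N.+1))) big_ltn_cond //=.
  rewrite big_nat_cond [RHS]big_nat_cond.
  by apply: eq_bigl => u; lia.
move=> u _; rewrite big_mkcond big_ord_recr /= -big_mkcond /=.
by rewrite (ltn_ord u) andbT.
Qed.

Lemma DeltaW_transmission n : (1 < n)%N -> DeltaW d n = transmission n.
Proof. by case: n => [|n] // _; rewrite /DeltaW W_succ addrC addKr. Qed.

Lemma sum_parent_const (V : nmodType) (G : nat -> V) a l w : (1 < a)%N -> (0 < w)%N ->
  ((w == 1%N) || (d * (w - 1) + 3 <= a))%N -> (a + l <= d * w + 3)%N ->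
  \sum_(a <= u < a + l) G (parent u) = G w *+ l.
Proof.
move=> a_gt1 w_gt0 lo_a hi_a; rewrite -{2}(addKn a l) -sumr_const_nat.
apply: eq_big_nat => u u_in; congr G; apply/eqP; rewrite parent_eq_interval //; last lia.
by case: eqP lo_a => /= [_ _ | _]; lia.
Qed.

Lemma sum_parent_block (V : nmodType) (G : nat -> V) q l : (0 < q)%N -> (l <= d)%N ->
  \sum_(2 <= u < d * q + 3 + l) G (parent u) =
  G 1%N *+ d.+1 + (\sum_(2 <= w < q.+1) G w) *+ d + G q.+1 *+ l.
Proof.
case: q => [//|p] _; elim: p l => [|p IH] l l_le.
  rewrite muln1 (big_cat_nat (n := 2 + d.+1)) //=; try lia.
  rewrite (_ : d + 3 + l = 2 + d.+1 + l)%N; last lia.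
  rewrite (sum_parent_const _ (w := 1)) //; try lia.
  rewrite (sum_parent_const _ (w := 2)) //= ?big_geq ?mul0rn ?addr0 //; lia.
have -> : (d * p.+2 + 3 + l = (d * p.+1 + 3 + d) + l)%N by rewrite mulnS; lia.
rewrite (big_cat_nat (n := d * p.+1 + 3 + d)) /= ?IH ?(sum_parent_const _ (w := p.+3)) //;
  rewrite ?mulnS ?subSS ?subn0; try lia.
by rewrite [in RHS]big_nat_recr //= mulrnDl !addrA.
Qed.

End Transmission.

Section TransmissionRecurrence.
Variable d : nat.
Hypothesis d_gt1 : (1 < d)%N.
Local Notation parent := (parent d).
Local Notation tdist := (tdist d).
Local Notation level := (level d).

Lemma transmission_level0 n : level 0 n -> transmission d n = 'X + (n - 2)%:R * 'X^2.
Proof.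
move=> n_lvl; have /andP [n_ge2 n_lt] : (2 <= n < d + 3)%N by rewrite -level0.
have parent1 u : (2 <= u <= n)%N -> parent u = 1%N.
  by move=> u_in; apply: parent_level0 => //; rewrite level0 //; lia.
rewrite transmission_split //= (tdist_root_level d_gt1 n_lvl) parent1 ?n_ge2 ?leqnn //.
rewrite [X in _ + X]big1_seq => [|u /andP [/ancestor_leq u_le1]]; last first.
  by rewrite mem_index_iota; lia.
rewrite (eq_big_nat _ _ (F2 := fun=> 1)) => [|u u_in]; last first.
  by rewrite parent1 ?tdistxx //; lia.
by rewrite sumr_const_nat addr0 expr1 mulrC.
Qed.

Lemma sum_ancestor_level k P N : level k P -> (P < N)%N ->
  \sum_(2 <= u < N | ancestor d u P) ('X^(tdist (parent u) P) - 'X^2 * 'X^(tdist (parent u) P))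
  = 'X + 'X^2 - 'X^(k.+2) - 'X^(k.+3) :> {poly int}.
Proof.
move=> P_lvl P_lt; have [P_root P_iter_gt1] := level_iter_parent d_gt1 P_lvl.
have P_gt0 : (0 < P)%N := ltnW (P_iter_gt1 0%N isT).
rewrite (sum_ancestor _ P_root) // (telescope_sumr_eq (fun i => - ('X^(i.+1) + 'X^(i.+2)))) //.
  by rewrite !exprS expr0; ring.
move=> i /andP [_ i_lt]; rewrite -iterS tdist_iter_parent // => [|j j_lt].
  by rewrite !exprS; ring.
by apply: P_iter_gt1; lia.
Qed.

Lemma transmission_rec k n : level k.+1 n ->
  transmission d n
  = 'X + ((n - 3) %% d).+1%:R * 'X^2 + d%:R * 'X^2 * transmission d (parent n).
Proof.
move=> n_lvl; have P_lvl := parent_level d_gt1 n_lvl.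
have n_gt2 : (2 < n)%N.
  by move: n_lvl => /andP [+ _]; apply: leq_trans; rewrite nkS ?leq_addr.
have n_eq := parent_divn_eq d n_gt2.
set P := parent n in n_eq P_lvl *; set l := ((n - 3) %% d)%N in n_eq *.
have P_gt1 : (1 < P)%N := (level_iter_parent d_gt1 P_lvl).2 0%N isT.
have l_le : (l <= d)%N by rewrite ltnW ?ltn_pmod ?(ltnW d_gt1).
have P1_gt0 : (0 < P.-1)%N by lia.
have block := sum_parent_block (ltnW d_gt1) (fun w => 'X^(tdist w P) : {poly int}) P1_gt0 l_le.
rewrite prednK -?n_eq ?(ltnW P_gt1) // in block.
have P_lt : (P < n)%N := parent_lt d (ltnW n_gt2).
rewrite (@transmission_split d n (ltnW n_gt2)) /= -/P (sum_ancestor_level P_lvl P_lt).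
rewrite block /transmission [in RHS]big_ltn // tdistxx ?(ltnW P_gt1) //.
rewrite !(tdist_root_level d_gt1 P_lvl) (tdist_root_level d_gt1 n_lvl).
move: (\sum_(2 <= w < P) _) => S.
by rewrite -[l.+1]addn1 natrD !exprS expr0; ring.
Qed.

Definition delta_formula (k n : nat) : {poly int} :=
  \sum_(i < k.+1) ((d ^ i)%:R * 'X^(2 * i + 1))
    + \sum_(i < (if (n < mk d k)%N then k else k.+1))
        ((d ^ i * (label d k n i + 1))%:R * 'X^(2 * i + 2)).

Lemma delta_formula_rec k n : level k.+1 n ->
  delta_formula k.+1 n
  = 'X + ((n - 3) %% d).+1%:R * 'X^2 + d%:R * 'X^2 * delta_formula k (parent n).
Proof.
move=> n_lvl; rewrite /delta_formula (mk_parent d_gt1 n_lvl).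
set K := if (parent n < mk d k)%N then k else k.+1.
have -> : (if (parent n < mk d k)%N then k.+1 else k.+2) = K.+1 by rewrite /K; case: ifP.
rewrite [\sum_(i < k.+2) _]big_ord_recl [\sum_(i < K.+1) _]big_ord_recl /=.
rewrite (eq_bigr (fun i : 'I_k.+1 => d%:R * 'X^2 * ((d ^ i)%:R * 'X^(2 * i + 1)))) => [|i _].
  rewrite [X in _ + (_ + X)](eq_bigr (fun i : 'I_K =>
    d%:R * 'X^2 * ((d ^ i * (label d k (parent n) i + 1))%:R * 'X^(2 * i + 2)))) => [|i _].
    by rewrite -!mulr_sumr (label0 d_gt1 n_lvl) addn1 expn0 mul1n mul1r; ring.
  rewrite /bump /= (label_parent d_gt1 _ n_lvl) expnS -mulnA natrM.
  by rewrite (_ : 2 * (1 + i) + 2 = 2 + (2 * i + 2))%N ?exprD; [ring | lia].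
rewrite /bump /= expnS natrM.
by rewrite (_ : 2 * (1 + i) + 1 = 2 + (2 * i + 1))%N ?exprD; [ring | lia].
Qed.

Lemma transmission_formula k n : level k n -> transmission d n = delta_formula k n.
Proof.
elim: k n => [|k IH] n n_lvl.
  rewrite transmission_level0 // /delta_formula mk0 // big_ord1 expn0 mul1r /= expr1.
  move: n_lvl; rewrite level0 // => /andP [n_ge2 n_lt].
  case: ltnP => [n_lt3 | n_ge3].
    by rewrite big_ord0 (_ : n - 2 = 0)%N ?mul0r ?addr0 //; lia.
  rewrite big_ord1 /= expn0 mul1n /label (nk0 d_gt1) expn0 divn1 muln1.
  rewrite (_ : n - 2 + (d - 1) = (n - 3) + d)%N ?modnDr ?modn_small; try lia.
  by rewrite (_ : n - 3 + 1 = n - 2)%N //; lia.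
by rewrite (transmission_rec n_lvl) (delta_formula_rec n_lvl) IH // parent_level.
Qed.

End TransmissionRecurrence.

Unset Implicit Arguments.

Theorem lemma2p1 (d n k : nat) :
  (2 <= d)%N -> (2 <= n)%N -> (nk d k <= n)%N -> (n < nk d k.+1)%N ->
  DeltaW d n =
    \sum_(i < k.+1) ((d ^ i)%:R * 'X^(2 * i + 1))
    + \sum_(i < (if (n < mk d k)%N then k else k.+1))
        ((d ^ i * (label d k n i + 1))%:R * 'X^(2 * i + 2)).
Proof.
move=> d_gt1 n_gt1 nk_le n_lt.
rewrite (DeltaW_transmission (ltnW d_gt1) n_gt1).
by apply: transmission_formula => //; rewrite /level nk_le n_lt.
Qed.
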